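(* In the supersample setting described in the context, let $\ell$ be the zero-one loss and let $\mathcal A$ be an interpolating algorithm. For each $i$, let $\alpha_i=P(\Delta L_i=0\mid U_i=0)$ (which equals $P(\Delta L_i=0\mid U_i=1)$). Then for each $i$, $I(\Delta L_i;U_i)=(1-\alpha_i)\ln 2$ nats, and \[ |\mathrm{Err}|=L_\mu=\sum_{i=1}^n\frac{I(\Delta L_i;U_i)}{n\ln 2}. \]
   Context: Let $\mathcal Z=\mathcal X\times\mathcal Y$ and let $\mu$ be a distribution on $\mathcal Z$. A (possibly randomized) learning algorithm $\mathcal A$ maps a training sample in $\mathcal Z^n$ to a hypothesis $W\in\mathcal W$ (described by $P_{W|S}$); each $w$ defines a predictor $f_w:\mathcal X\to\mathcal Y$. The zero-one loss is $\ell(w,(x,y))=\mathbb 1\{f_w(x)\neq y\}$. For $S=(Z_1,\dots,Z_n)\sim\mu^{n}$ and $W\sim P_{W|S}$, let $L_\mu=\mathbb E_W\mathbb E_{Z'\sim\mu}[\ell(W,Z')]$ (with $Z'$ independent of $(S,W)$), $L_S(w)=\frac1n\sum_{i}\ell(w,Z_i)$, $L_n=\mathbb E_{W,S}[L_S(W)]$, $\mathrm{Err}=L_\mu-L_n$. Supersample: $\widetilde Z=(\widetilde Z_{i,j})_{i\in\{1,\dots,n\},j\in\{0,1\}}$ with i.i.d. entries of law $\mu$; $U=(U_1,\dots,U_n)$ uniform on $\{0,1\}^n$, independent of $\widetilde Z$; $W=\mathcal A(\widetilde Z_U)$ where $\widetilde Z_U=(\widetilde Z_{1,U_1},\dots,\widetilde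 Z_{n,U_n})$. Put $L_{i,j}=\ell(W,\widetilde Z_{i,j})$, $L_i^+=L_{i,0}$, $L_i^-=L_{i,1}$, $\Delta L_i=L_i^- - L_i^+\in\{-1,0,1\}$. An algorithm is interpolating if it achieves zero training error, i.e. $\ell(W,\widetilde Z_{i,U_i})=0$ almost surely for every $i$. Mutual information is in nats. *)

From HB Require Import structures.
From mathcomp Require Import all_boot all_order all_algebra.
From mathcomp Require Import all_classical all_reals all_analysis.
Set Implicit Arguments. Unset Strict Implicit. Unset Printing Implicit Defensive.
Import Order.TTheory GRing.Theory Num.Theory.
Local Open Scope classical_set_scope.
Local Open Scope ring_scope.

(* Index set of the basic random variables of the supersample construction:
   the 2n supersample entries Zt i j, the n selector bits U i, and one
   fresh test point Z' (written Zp). *)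
Definition sidx (n : nat) := ((('I_n * bool) + 'I_n) + unit)%type.

Section defs.
Context {R : realType} {dO : measure_display} {Omega : measurableType dO}.

Definition rv_events {d} {T : measurableType d} (X : Omega -> T) : set (set Omega) :=
  [set A | exists B, measurable B /\ A = X @^-1` B].

Definition bool_events (X : Omega -> bool) : set (set Omega) :=
  [set A | exists B : set bool, A = X @^-1` B].

Definition mutually_independent {I : finType} (P : probability Omega R)
    (F : I -> set (set Omega)) : Prop :=
  forall (J : {set I}) (A : I -> set Omega),
    (forall k, k \in J -> F k (A k)) ->
    P (\bigcap_(k in [set k | k \in J]) A k) = (\prod_(k in J) P (A k))%E.

Definition prR (P : probability Omega R) (A : set Omega) : R := fine (P A).

(* Mutual information (in nats) between two discrete random variables X and Y
   whose values lie in the finite lists sx and sy (assumed duplicate-free and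
   covering the ranges), with the convention 0 ln 0 = 0. *)
Definition mutual_info {T1 T2 : eqType} (P : probability Omega R)
    (X : Omega -> T1) (Y : Omega -> T2) (sx : seq T1) (sy : seq T2) : R :=
  \sum_(x <- sx) \sum_(y <- sy)
    let pxy := prR P (X @^-1` [set x] `&` Y @^-1` [set y]) in
    let px := prR P (X @^-1` [set x]) in
    let py := prR P (Y @^-1` [set y]) in
    if pxy == 0 then 0 else pxy * ln (pxy / (px * py)).

End defs.

Definition zero_one_loss {R : realType} {W X : Type} {eY : eqType}
  (f : W -> X -> eY) (w : W) (z : X * eY) : R :=
  if f w z.1 != z.2 then 1 else 0.

Section supersample.
Context {R : realType} {dO : measure_display} {Omega : measurableType dO}
  {dX dY dW : measure_display} {X : measurableType dX} {Y : measurableType dY}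
  {Wt : measurableType dW} {n : nat}.
Variables (Zt : 'I_n -> bool -> Omega -> (X * Y)%type) (U : 'I_n -> Omega -> bool)
  (Zp : Omega -> (X * Y)%type) (W : Omega -> Wt) (f : Wt -> X -> Y).

(* the event classes of the basic random variables, indexed by sidx n
   (j = false stands for column 0, j = true for column 1) *)
Definition supersample_events (k : sidx n) : set (set Omega) :=
  match k with
  | inl (inl (i, j)) => rv_events (Zt i j)
  | inl (inr i) => bool_events (U i)
  | inr _ => rv_events Zp
  end.

Definition supersample_generators : set (set Omega) :=
  [set A | exists k, supersample_events k A].

Definition train_sample (w : Omega) : n.-tuple (X * Y)%type :=
  [tuple Zt i (U i w) w | i < n].

(* L_{i,j} = loss of W on Zt_{i,j};  L_i^+ = L_{i,0}, L_i^- = L_{i,1} *)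
Definition Lij (i : 'I_n) (j : bool) (w : Omega) : R :=
  zero_one_loss f (W w) (Zt i j w).

Definition DeltaL (i : 'I_n) (w : Omega) : R := Lij i true w - Lij i false w.

Definition alpha (P : probability Omega R) (i : 'I_n) : R :=
  prR P (DeltaL i @^-1` [set 0] `&` U i @^-1` [set false])
  / prR P (U i @^-1` [set false]).

Definition alpha1 (P : probability Omega R) (i : 'I_n) : R :=
  prR P (DeltaL i @^-1` [set 0] `&` U i @^-1` [set true])
  / prR P (U i @^-1` [set true]).

Definition MI_DeltaL_U (P : probability Omega R) (i : 'I_n) : R :=
  mutual_info P (DeltaL i) (U i) [:: -1; 0; 1] [:: false; true].

Definition L_mu (P : probability Omega R) : R :=
  fine (\int[P]_w (zero_one_loss f (W w) (Zp w) : R)%:E).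

Definition L_n (P : probability Omega R) : R :=
  fine (\int[P]_w ((n%:R)^-1 * \sum_(i < n) zero_one_loss f (W w) (Zt i (U i w) w))%:E).

Definition gen_error (P : probability Omega R) : R := L_mu P - L_n P.

End supersample.

From HB Require Import structures.
From mathcomp Require Import all_boot all_order all_algebra.
From mathcomp Require Import all_classical all_reals all_analysis.
From mathcomp Require Import ring lra measurable_realfun.
Import Order.TTheory GRing.Theory Num.Theory.
Local Open Scope classical_set_scope.
Local Open Scope ring_scope.

(* Conditionally on U_i = b, the pair (W, Z~_{i,1-b}) has the same law as
   (W, Z'): neither held-out point enters the training sample S, which alone
   drives W. Independence of the supersample gives this for S on cylinder
   events, pi-lambda uniqueness extends it to all events of S, and the kernel
   description of W transfers it to the pair. Hence each event
   {U_i = b, W errs on the unused entry of row i} has probability L_mu / 2.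
   By interpolation, on {U_i = b} the difference Delta L_i is +-1 exactly on
   that event and 0 elsewhere; this gives alpha_i = 1 - L_mu,
   I(Delta L_i; U_i) = L_mu ln 2 by direct computation, and L_n = 0. *)

Lemma preimage_false {T : Type} (h : T -> bool) :
  h @^-1` [set false] = ~` (h @^-1` [set true]).
Proof. by apply/seteqP; split => w /=; case: (h w). Qed.

Lemma big_pair_bool {V : Type} {idx : V} {op : Monoid.com_law idx} {I : finType}
    (F : I * bool -> V) :
  \big[op/idx]_p F p = \big[op/idx]_i op (F (i, true)) (F (i, false)).
Proof.
transitivity (\big[op/idx]_i \big[op/idx]_(c : bool) F (i, c)).
  by rewrite pair_big; apply: eq_bigr => -[].
by apply: eq_bigr => i _; rewrite big_bool.
Qed.

Lemma fsbig_cst_ffun_coord {V : Type} {idx : V} {op : Monoid.com_law idx}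
    {I : finType} (x : V) (i : I) (b1 b2 : bool) :
  \big[op/idx]_(u \in [set u : {ffun I -> bool} | u i = b1]) x =
  \big[op/idx]_(u \in [set u : {ffun I -> bool} | u i = b2]) x.
Proof.
have [<-//|b12] := eqVneq b1 b2.
pose flip (u : {ffun I -> bool}) := [ffun k => if k == i then ~~ u k else u k].
have flipK : involutive flip.
  by move=> u; apply/ffunP => k; rewrite !ffunE; case: eqP => // _; rewrite negbK.
have flip_i u : flip u i = ~~ u i by rewrite ffunE eqxx.
have -> : [set u : {ffun I -> bool} | u i = b1] =
    flip @` [set u : {ffun I -> bool} | u i = b2].
  apply/seteqP; split => u /=.
    move=> ub1; exists (flip u); last exact: flipK.
    by rewrite flip_i ub1; case: b1 b2 b12 {ub1} => -[].
  by move=> [v /= vb2 <-]; rewrite flip_i vb2; case: b1 b2 b12 {vb2} => -[].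
by rewrite fsbig_image // => u v _ _ /(congr1 flip); rewrite !flipK.
Qed.

Lemma mul_indic_eq {V : numDomainType} (s x : V) (e : bool) : s != 0 ->
  s * (if e then 1 else 0) = x <->
  (if x == s then e else if x == 0 then ~~ e else false).
Proof.
move=> s0; case: e; rewrite ?mulr1 ?mulr0 /=.
  by case: eqP => [->|xs]; [|rewrite if_same; split => // /esym].
case: eqP => [->|xs]; first by split => // /esym/eqP; rewrite (negbTE s0).
by case: eqP => [->|x0]; split => // /esym.
Qed.

Lemma ln_ratio_term_half {R : realType} (p : R) :
  (if p == 0 then 0 else p * ln (p / (p / 2))) = p * ln 2.
Proof.
have [->|p0] := eqVneq p 0; first by rewrite mul0r.
by congr (_ * ln _); field.
Qed.

Lemma ln_ratio_term_mean {R : realType} (p : R) :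
  (if p == 0 then 0 else p * ln (p / ((p + p) / 2))) = 0.
Proof.
have [//|p0] := eqVneq p 0.
have -> : p / ((p + p) / 2) = 1 by field; rewrite -mulr2n mulrn_eq0.
by rewrite ln1 mulr0.
Qed.

Section measure_facts.
Local Open Scope ereal_scope.
Context {d : measure_display} {T : measurableType d} {R : realType}.

Lemma measurable_preimage {d'} {T' : measurableType d'} (g : T -> T') (B : set T') :
  measurable_fun setT g -> measurable B -> measurable (g @^-1` B).
Proof. by move=> mg mB; rewrite -[X in measurable X]setTI; exact: mg. Qed.

Lemma measure_ae_eqset (m : {measure set T -> \bar R}) (A B : set T) :
  measurable A -> measurable B -> {ae m, forall w, A w <-> B w} -> m A = m B.
Proof.
move=> mA mB AB; rewrite -[A]setIT -[B]setIT -!integral_indic //.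
apply: ae_eq_integral => //; try by apply/measurable_EFinP; exact: measurable_indic.
apply: filterS AB => w AB _; rewrite !indicE.
by case: (pselect (A w)) => Aw; [rewrite !mem_set // -AB | rewrite !memNset // -AB].
Qed.

Lemma measureU_bool (m : {measure set T -> \bar R}) (A : set T) (h : T -> bool) :
  measurable A -> measurable (h @^-1` [set true]) ->
  m A = m (A `&` h @^-1` [set false]) + m (A `&` h @^-1` [set true]).
Proof.
move=> mA mh; have mhf : measurable (h @^-1` [set false]).
  by rewrite preimage_false; exact: measurableC.
rewrite -measureU; [|exact: measurableI|exact: measurableI|].
- congr (m _); apply/seteqP; split => w /=; last by case=> -[].
  by case: (h w) => Aw; [right|left].
- by apply/seteqP; split => w // [[_ /= ->] [_ /=]].
Qed.

Lemma ge0_integral_mrestr (m : {measure set T -> \bar R}) (F : set T)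
    (mF : measurable F) (h : T -> \bar R) :
  measurable_fun setT h -> (forall x, 0 <= h x) ->
  \int[mrestr m mF]_x h x = \int[m]_(x in F) h x.
Proof.
move=> mh h0; rewrite -(setUv F) ge0_integral_setU //;
  [|exact: measurableC|exact: measurable_funTS|exact/disj_setPCl].
have -> : \int[mrestr m mF]_(x in ~` F) h x = 0.
  rewrite (eq_measure_integral mzero) ?integral_measure_zero // => A mA AF.
  by rewrite /= /mrestr (_ : A `&` F = set0) ?measure0 //; apply/seteqP; split => x // [/AF].
rewrite adde0; apply: eq_measure_integral => A mA AF.
by rewrite /= /mrestr setIidl.
Qed.

Lemma eq_ge0_integral_preimage {d'} {T' : measurableType d'}
    (m : {measure set T -> \bar R}) (g : T -> T') (F1 F2 : set T) (h : T' -> \bar R) :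
  measurable F1 -> measurable F2 ->
  measurable_fun setT g -> measurable_fun setT h -> (forall y, 0 <= h y) ->
  (forall D, measurable D -> m (g @^-1` D `&` F1) = m (g @^-1` D `&` F2)) ->
  \int[m]_(x in F1) h (g x) = \int[m]_(x in F2) h (g x).
Proof.
move=> mF1 mF2 mg mh h0 eqF.
have mhg : measurable_fun setT (h \o g) by exact: measurableT_comp.
have pushE (F : set T) (mF : measurable F) :
    \int[m]_(x in F) h (g x) = \int[pushforward (mrestr m mF) g]_y h y.
  rewrite -ge0_integral_mrestr // ge0_integral_pushforward //.
rewrite (pushE _ mF1) (pushE _ mF2).
by apply: eq_measure_integral => D mD _; exact: eqF.
Qed.

Lemma measure_preimageI_unique {d'} {T' : measurableType d'} (P : probability T R)
    {G : set (set T')} {g1 g2 : T -> T'} {F1 F2 : set T} :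
  measurable = <<s G >> -> setI_closed G -> G setT ->
  measurable_fun setT g1 -> measurable_fun setT g2 ->
  measurable F1 -> measurable F2 ->
  (forall C, G C -> P (g1 @^-1` C `&` F1) = P (g2 @^-1` C `&` F2)) ->
  forall D, measurable D -> P (g1 @^-1` D `&` F1) = P (g2 @^-1` D `&` F2).
Proof.
move=> genG GI GT mg1 mg2 mF1 mF2 eqG D mD.
apply: (measure_unique G (fun=> setT) genG GI (fun=> GT) _
  (pushforward (mrestr P mF1) g1) (pushforward (mrestr P mF2) g2)) => //.
- by rewrite bigcup_const //; exists 0%N.
- move=> _; apply: (le_lt_trans _ (ltry 1%R)).
  change (P (g1 @^-1` setT `&` F1) <= 1); apply: probability_le1.
  by apply: measurableI => //; exact: measurable_preimage.
Qed.

End measure_facts.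

Section rectangles.
Context {d1 d2 : measure_display} {T1 : measurableType d1} {T2 : measurableType d2}.

Lemma measurable_rectangles_setI_closed :
  setI_closed [set A `*` B | A in @measurable _ T1 & B in @measurable _ T2].
Proof.
move=> _ _ [A1 mA1 [B1 mB1 <-]] [A2 mA2 [B2 mB2 <-]].
exists (A1 `&` A2); first exact: measurableI.
by exists (B1 `&` B2); [exact: measurableI | rewrite setXI].
Qed.

Lemma measurable_rectangles_setT :
  [set A `*` B | A in @measurable _ T1 & B in @measurable _ T2] setT.
Proof. by exists setT => //; exists setT => //; exact: setXTT. Qed.

End rectangles.

Section tuple_cylinder.
Context {d : measure_display} {T : measurableType d} {n : nat}.

Definition tuple_cylinder (A : 'I_n -> set T) : set (n.-tuple T) :=
  [set t | forall k, A k (tnth t k)].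

Definition tuple_cylinders : set (set (n.-tuple T)) :=
  [set C | exists A, (forall k, measurable (A k)) /\ C = tuple_cylinder A].

Lemma measurable_tuple_cylinder A :
  (forall k, measurable (A k)) -> measurable (tuple_cylinder A).
Proof.
move=> mA.
have -> : tuple_cylinder A = \bigcap_(k in [set: 'I_n]) ((@tnth n T)^~ k @^-1` A k).
  by apply/seteqP; split => t /= tA k; [move=> _|]; exact: tA.
apply: fin_bigcap_measurable; first exact: finite_finset.
by move=> k _; apply: measurable_preimage => //; exact: measurable_tnth.
Qed.

Lemma measurable_tuple_cylindersE : measurable = <<s tuple_cylinders >>.
Proof.
apply/seteqP; split; last first.
  apply: smallest_sub; first exact: sigma_algebra_measurable.
  by move=> C [A [mA ->]]; exact: measurable_tuple_cylinder.
apply: smallest_sub; first exact: smallest_sigma_algebra.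
move=> C; rewrite -bigcup_seq => -[k _ [B mB <-]].
apply: sub_sigma_algebra; exists (fun j => if j == k then B else setT); split.
  by move=> j; case: ifP.
apply/seteqP; split => t /=.
  by move=> [_ tB] j; case: ifP => // /eqP ->.
by move=> tB; split => //; have := tB k; rewrite eqxx.
Qed.

Lemma tuple_cylinders_setI_closed : setI_closed tuple_cylinders.
Proof.
move=> _ _ [A1 [mA1 ->]] [A2 [mA2 ->]].
exists (fun k => A1 k `&` A2 k); split; first by move=> k; exact: measurableI.
apply/seteqP; split => t /=; first by move=> [tA1 tA2] k.
by move=> tA; split => k; case: (tA k).
Qed.

Lemma tuple_cylinders_setT : tuple_cylinders setT.
Proof. by exists (fun=> setT); split => //; apply/seteqP. Qed.

End tuple_cylinder.

Section zero_one_loss.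
Context {R : realType} {dW dX dY : measure_display} {Wt : measurableType dW}
  {X : measurableType dX} {Y : measurableType dY} (f : Wt -> X -> Y).

Definition misclassified : set (Wt * (X * Y)) := [set p | f p.1 p.2.1 != p.2.2].

Lemma zero_one_loss_indic v z :
  zero_one_loss f v z = \1_misclassified (v, z) :> R.
Proof.
rewrite indicE /zero_one_loss; case: ifPn => vz; first by rewrite mem_set.
by rewrite memNset //=; apply/negP.
Qed.

Context {d : measure_display} {T : measurableType d}.
Hypothesis mloss : measurable misclassified.

Lemma measurable_zero_one_loss (V : T -> Wt) (Z : T -> X * Y) :
  measurable_fun setT V -> measurable_fun setT Z ->
  measurable_fun setT (fun w => zero_one_loss f (V w) (Z w) : R).
Proof.
move=> mV mZ.
rewrite (_ : (fun w => _) = \1_misclassified \o (fun w => (V w, Z w))).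
  by apply: measurableT_comp; [exact: measurable_indic|exact: measurable_fun_pair].
by apply: funext => w; rewrite /= zero_one_loss_indic.
Qed.

Lemma integral_zero_one_loss (m : {measure set T -> \bar R}) V Z :
  measurable_fun setT V -> measurable_fun setT Z ->
  (\int[m]_w (zero_one_loss f (V w) (Z w) : R)%:E =
   m ((fun w => (V w, Z w)) @^-1` misclassified))%E.
Proof.
move=> mV mZ; rewrite -[X in m X]setIT -integral_indic //.
  by apply: eq_integral => w _; rewrite zero_one_loss_indic !indicE.
exact: measurable_preimage (measurable_fun_pair mV mZ) mloss.
Qed.

End zero_one_loss.

Section supersample.
Local Open Scope ereal_scope.
Context {R : realType} {dO : measure_display} {Omega : measurableType dO}
  {dX dY dW : measure_display} {X : measurableType dX} {Y : measurableType dY}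
  {Wt : measurableType dW} {n : nat} {mu : probability (X * Y)%type R}
  {K : R.-pker (n.-tuple (X * Y)%type) ~> Wt} (P : probability Omega R)
  (f : Wt -> X -> Y) (Zt : 'I_n -> bool -> Omega -> (X * Y)%type)
  (U : 'I_n -> Omega -> bool) (Zp : Omega -> (X * Y)%type) (W : Omega -> Wt).
Hypotheses (mloss : measurable (misclassified f))
  (mZt : forall i j, measurable_fun setT (Zt i j))
  (mU : forall i, measurable (U i @^-1` [set true]))
  (mZp : measurable_fun setT Zp)
  (mW : measurable_fun setT W)
  (indep : mutually_independent P (supersample_events Zt U Zp))
  (lawZt : forall i j B, measurable B -> P (Zt i j @^-1` B) = mu B)
  (lawZp : forall B, measurable B -> P (Zp @^-1` B) = mu B)
  (lawU : forall i, P (U i @^-1` [set true]) = (2^-1)%R%:E)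
  (lawW : forall E, <<s supersample_generators Zt U Zp >> E ->
     forall B, measurable B ->
     P (E `&` W @^-1` B) = \int[P]_(w in E) K (train_sample Zt U w) B)
  (interp : forall i : 'I_n,
     {ae P, forall w, zero_one_loss f (W w) (Zt i (U i w) w) = 0%R :> R}).

Local Notation S := (train_sample Zt U).
Local Notation Lmu := (L_mu Zp W f P).
Local Notation Delta i := (DeltaL (R := R) Zt W f i).

Lemma measurable_U i b : measurable (U i @^-1` [set b]).
Proof. by case: b; rewrite ?preimage_false; [exact: mU | exact/measurableC/mU]. Qed.

Lemma P_U i b : P (U i @^-1` [set b]) = (2^-1)%R%:E.
Proof.
case: b; first exact: lawU.
rewrite preimage_false probability_setC ?lawU; last exact: mU.
change ((1 - 2^-1 : R)%:E = (2^-1 : R)%:E); congr EFin; lra.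
Qed.

Lemma measurable_selected i : measurable_fun setT (fun w => Zt i (U i w) w).
Proof.
move=> _ B mB; rewrite setTI.
have -> : (fun w => Zt i (U i w) w) @^-1` B =
    (U i @^-1` [set true] `&` Zt i true @^-1` B) `|`
    (U i @^-1` [set false] `&` Zt i false @^-1` B).
  apply/seteqP; split => w /=; first by case: (U i w) => ?; [left|right].
  by case=> -[->].
by apply: measurableU; apply: measurableI;
  [exact: measurable_U|exact: measurable_preimage|exact: measurable_U|exact: measurable_preimage].
Qed.

Lemma measurable_train_sample : measurable_fun setT S.
Proof.
apply/measurable_fun_tnthP => k.
rewrite (_ : _ \o _ = fun w => Zt k (U k w) w); first exact: measurable_selected.
by apply: funext => w; rewrite /= tnth_mktuple.
Qed.

(* On {U_i = b}, [heldout i b false] is the entry of row i that is left out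
   of the training sample and [heldout i b true] is the test point Z'. *)
Definition heldout (i : 'I_n) (b fresh : bool) : Omega -> X * Y :=
  if fresh then Zp else Zt i (~~ b).

Lemma measurable_heldout i b fresh : measurable_fun setT (heldout i b fresh).
Proof. by rewrite /heldout; case: fresh. Qed.

Definition heldout_event i b fresh (B : set (X * Y)) : set Omega :=
  U i @^-1` [set b] `&` heldout i b fresh @^-1` B.

Lemma measurable_heldout_event i b fresh B :
  measurable B -> measurable (heldout_event i b fresh B).
Proof.
move=> mB; apply: measurableI; first exact: measurable_U.
exact: measurable_preimage (measurable_heldout _ _ _) mB.
Qed.

Lemma heldout_event_generated i b fresh B : measurable B ->
  <<s supersample_generators Zt U Zp >> (heldout_event i b fresh B).
Proof.
move=> mB; apply: (@measurableI _ (g_sigma_algebraType (supersample_generators Zt U Zp)));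
  apply: sub_sigma_algebra; first by exists (inl (inr i)); exists [set b].
by rewrite /heldout; case: fresh; [exists (inr tt) | exists (inl (inl (i, ~~ b)))]; exists B.
Qed.

(* Splitting according to the whole selector vector U = u turns the event
   {S in cylinder A, heldout in B} into intersections of events of the
   independent basic variables, one factor per index of [sidx n]. *)
Definition atom (A : 'I_n -> set (X * Y)) (Z : Omega -> X * Y) (B : set (X * Y))
    (u : {ffun 'I_n -> bool}) : set Omega :=
  [set w | (forall k, U k w = u k /\ A k (Zt k (u k) w)) /\ B (Z w)].

Definition atom_factor (A : 'I_n -> set (X * Y)) (B : set (X * Y)) (i : 'I_n)
    (fresh : bool) (u : {ffun 'I_n -> bool}) (k : sidx n) : set Omega :=
  match k with
  | inl (inl (k, c)) => if c == u k then Zt k c @^-1` A k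
                        else if ~~ fresh && (k == i) then Zt k c @^-1` B else setT
  | inl (inr k) => U k @^-1` [set u k]
  | inr _ => if fresh then Zp @^-1` B else setT
  end.

Lemma atom_bigcap A B i b fresh (u : {ffun 'I_n -> bool}) : u i = b ->
  atom A (heldout i b fresh) B u =
  \bigcap_(k in [set k | k \in [set: sidx n]%SET]) atom_factor A B i fresh u k.
Proof.
move=> ub; apply/seteqP; split => w /=.
  move=> [AU Bw] [[[k c]|k]|[]] _ /=.
  - case: ifPn => [/eqP ->|cu]; first exact: (AU k).2.
    case: ifPn => // /andP[nfresh /eqP ki]; subst k.
    by move: nfresh Bw cu; rewrite /heldout ub; case: fresh; case: c; case: (b).
  - exact: (AU k).1.
  - by move: Bw; rewrite /heldout; case: fresh.
move=> F; split.
  move=> k; split; first by apply: (F (inl (inr k))); rewrite /= inE.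
  by have := F (inl (inl (k, u k))); rewrite /= eqxx; apply; rewrite /= inE.
rewrite /heldout; case: fresh F => F; first by apply: (F (inr tt)); rewrite /= inE.
have := F (inl (inl (i, ~~ b))); rewrite /= ub eqxx.
by case: b {ub} => /=; apply; rewrite /= inE.
Qed.

Lemma atom_factor_events A B i fresh u k :
  (forall k, measurable (A k)) -> measurable B ->
  supersample_events Zt U Zp k (atom_factor A B i fresh u k).
Proof.
have setT_event d' (T' : measurableType d') (Z : Omega -> T') : rv_events Z setT.
  by exists setT; split => //; rewrite preimage_setT.
move=> mA mB; case: k => [[[k c]|k]|[]] /=.
- case: ifP => _; first by exists (A k).
  by case: ifP => _; [exists B | exact: setT_event].
- by exists [set u k].
- by case: fresh; [exists B | exact: setT_event].
Qed.

Lemma measurable_atom_factor A B i fresh u k :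
  (forall k, measurable (A k)) -> measurable B -> measurable (atom_factor A B i fresh u k).
Proof.
move=> mA mB; case: k => [[[k c]|k]|[]] /=.
- by case: ifP => _; [|case: ifP => _ //]; exact: measurable_preimage.
- exact: measurable_U.
- by case: fresh => //; exact: measurable_preimage.
Qed.

Lemma P_atom A B i b fresh (u : {ffun 'I_n -> bool}) : u i = b ->
  (forall k, measurable (A k)) -> measurable B ->
  P (atom A (heldout i b fresh) B u) =
  mu B * \prod_(k < n) mu (A k) * \prod_(k < n) (2^-1)%R%:E.
Proof.
move=> ub mA mB.
rewrite atom_bigcap // (indep _ _ (fun k _ => atom_factor_events _ _ _ _ _ k mA mB)).
rewrite (eq_bigl xpredT) => [|k]; last by rewrite /= inE.
rewrite big_sumType /= big_sumType /= big_pair_bool.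
have -> : \prod_(k < n) P (U k @^-1` [set u k]) = \prod_(k < n) (2^-1)%R%:E.
  by apply: eq_bigr => k _; exact: P_U.
have -> : \prod_(j : unit) P (if fresh then Zp @^-1` B else setT) =
    if fresh then mu B else 1.
  rewrite (big_pred1 tt) => [|[]] //.
  by case: fresh; rewrite ?lawZp ?probability_setT.
rewrite (eq_bigr (fun k => mu (A k) * if ~~ fresh && (k == i) then mu B else 1)); last first.
  move=> k _ /=; case: (u k) => /=; case: ifP => _;
    by rewrite ?lawZt ?probability_setT ?mule1 ?mul1e // muleC.
rewrite big_split /=.
have -> : \prod_(k < n) (if ~~ fresh && (k == i) then mu B else 1) =
    if fresh then 1 else mu B.
  case: fresh => /=; first by rewrite big1.
  by rewrite (bigD1 i) //= eqxx big1 ?mule1 // => k /negbTE ->.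
by case: fresh; rewrite ?mule1 ?mul1e; [rewrite muleC muleA | rewrite (muleC _ (mu B))].
Qed.

Lemma P_cylinder_heldout A B i b fresh :
  (forall k, measurable (A k)) -> measurable B ->
  P (S @^-1` tuple_cylinder A `&` heldout_event i b fresh B) =
  \sum_(u \in [set u : {ffun 'I_n -> bool} | u i = b])
     (mu B * \prod_(k < n) mu (A k) * \prod_(k < n) (2^-1)%R%:E).
Proof.
move=> mA mB.
have -> : S @^-1` tuple_cylinder A `&` heldout_event i b fresh B =
    \bigcup_(u in [set u : {ffun 'I_n -> bool} | u i = b]) atom A (heldout i b fresh) B u.
  apply/seteqP; split => w /=.
    move=> [SA [Ub Bw]]; exists [ffun k => U k w]; first by rewrite /= ffunE.
    split => // k; rewrite ffunE; split => //.
    by have := SA k; rewrite tnth_mktuple.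
  move=> [u /= ub [AU Bw]]; split; last by split => //=; rewrite (AU i).1.
  by move=> k; rewrite tnth_mktuple (AU k).1; exact: (AU k).2.
rewrite measure_fin_bigcup //.
- by apply: eq_fsbigr => u; rewrite inE /= => ub; rewrite P_atom.
- exact: finite_finset.
- move=> u v _ _ [w [[Uu _] [Uv _]]]; apply/ffunP => k.
  by rewrite -(Uu k).1 (Uv k).1.
- move=> u /= ub; rewrite atom_bigcap //.
  apply: fin_bigcap_measurable; first exact: finite_finset.
  by move=> k _; exact: measurable_atom_factor.
Qed.

Lemma train_law_heldout_invariant i b1 b2 fresh1 fresh2 B : measurable B ->
  forall D, measurable D ->
  P (S @^-1` D `&` heldout_event i b1 fresh1 B) =
  P (S @^-1` D `&` heldout_event i b2 fresh2 B).
Proof.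
move=> mB; apply: (measure_preimageI_unique _ measurable_tuple_cylindersE
  tuple_cylinders_setI_closed tuple_cylinders_setT measurable_train_sample
  measurable_train_sample (measurable_heldout_event _ _ _ _ mB)
  (measurable_heldout_event _ _ _ _ mB)).
move=> _ [A [mA ->]]; rewrite !P_cylinder_heldout //.
exact: fsbig_cst_ffun_coord.
Qed.

Lemma heldout_exchangeable i b1 b2 fresh1 fresh2 C : measurable C ->
  P ((fun w => (W w, heldout i b1 fresh1 w)) @^-1` C `&` U i @^-1` [set b1]) =
  P ((fun w => (W w, heldout i b2 fresh2 w)) @^-1` C `&` U i @^-1` [set b2]).
Proof.
apply: (measure_preimageI_unique _ (measurable_prod_measurableType _ _)
  measurable_rectangles_setI_closed measurable_rectangles_setT);
  try exact: measurable_U; try exact: measurable_fun_pair mW (measurable_heldout _ _ _).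
move=> _ [B mB [A mA <-]].
have rectE b fresh : (fun w => (W w, heldout i b fresh w)) @^-1` (B `*` A) `&` U i @^-1` [set b] =
    heldout_event i b fresh A `&` W @^-1` B.
  by apply/seteqP; split => w /= [[? ?] ?].
rewrite !rectE !lawW //; try exact: heldout_event_generated.
apply: (eq_ge0_integral_preimage _ _ _ _ (fun t => K t B)).
- exact: measurable_heldout_event.
- exact: measurable_heldout_event.
- exact: measurable_train_sample.
- exact: measurable_kernel.
- by move=> t; exact: measure_ge0.
- exact: train_law_heldout_invariant.
Qed.

Definition heldout_error i b fresh : set Omega :=
  (fun w => (W w, heldout i b fresh w)) @^-1` misclassified f.

Lemma measurable_heldout_error i b fresh : measurable (heldout_error i b fresh).
Proof.
exact: measurable_preimage (measurable_fun_pair mW (measurable_heldout _ _ _)) mloss.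
Qed.

Lemma L_muE i b : Lmu%:E = P (heldout_error i b true).
Proof.
rewrite /L_mu integral_zero_one_loss // fineK //.
exact: fin_num_measure (measurable_heldout_error i b true).
Qed.

Lemma L_mu_ge0 : (0 <= Lmu)%R.
Proof.
apply: fine_ge0; apply: integral_ge0 => w _.
by rewrite lee_fin /zero_one_loss; case: ifP.
Qed.

Lemma P_heldout_error_U i b fresh :
  P (heldout_error i b fresh `&` U i @^-1` [set b]) = (Lmu / 2)%R%:E.
Proof.
have exch b' fresh' := heldout_exchangeable i b' false fresh' true _ mloss.
rewrite exch; set c := P (heldout_error i false true `&` U i @^-1` [set false]).
have Lmu_cc : Lmu%:E = c + c.
  rewrite (L_muE i false) (measureU_bool _ _ (U i)) //; last exact: measurable_heldout_error.
  by congr (_ + _); exact: (exch true true).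
have cfin : c \is a fin_num.
  apply: fin_num_measure; apply: measurableI; first exact: measurable_heldout_error.
  exact: measurable_U.
by move: Lmu_cc; rewrite -(fineK cfin) -EFinD => -[->]; congr EFin; lra.
Qed.

Lemma measurable_DeltaL i : measurable_fun setT (Delta i).
Proof. by apply: measurable_funB; exact: measurable_zero_one_loss. Qed.

Lemma ae_DeltaL i : {ae P, forall w,
  Delta i w = ((if U i w then -1 else 1) * Lij Zt W f i (~~ U i w) w)%R}.
Proof.
apply: filterS (interp i) => w; rewrite /DeltaL /Lij.
by case: (U i w) => /= ->; rewrite ?subr0 ?sub0r ?mul1r ?mulN1r.
Qed.

Lemma P_DeltaL_U i x b :
  P (Delta i @^-1` [set x] `&` U i @^-1` [set b]) =
  (if x == (if b then -1 else 1) then Lmu / 2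
   else if x == 0 then (1 - Lmu) / 2 else 0)%R%:E.
Proof.
pose s : R := (if b then -1 else 1)%R.
have s0 : (s != 0)%R by rewrite /s; case: (b); rewrite ?oppr_eq0 oner_eq0.
pose e w := f (W w) (Zt i (~~ b) w).1 != (Zt i (~~ b) w).2.
pose G := [set w | if x == s then e w else if x == 0%R then ~~ e w else false].
have GE : G = if x == s then heldout_error i b false
              else if x == 0%R then ~` heldout_error i b false else set0.
  by rewrite /G; case: ifP => _ //; case: ifP => _; apply/seteqP; split => w //= /negP.
have mE := measurable_heldout_error i b false.
rewrite (measure_ae_eqset _ _ (G `&` U i @^-1` [set b])).
- rewrite GE; case: ifP => _; first exact: P_heldout_error_U.
  case: ifP => _; last by rewrite set0I measure0.
  rewrite setIC -setDE measureD //; [|exact: measurable_U|].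
    transitivity ((2^-1)%R%:E - (Lmu / 2)%R%:E).
      by congr (_ - _); [exact: P_U | rewrite setIC; exact: P_heldout_error_U].
    by rewrite -EFinB; congr EFin; lra.
  apply: le_lt_trans (ltry 1%R); exact: probability_le1 (measurable_U i b).
- apply: measurableI; last exact: measurable_U.
  exact: measurable_preimage (measurable_DeltaL i) (measurable_set1 x).
- apply: measurableI; last exact: measurable_U.
  by rewrite GE; case: ifP => _ //; case: ifP => _ //; exact: measurableC.
- apply: filterS (ae_DeltaL i) => w /= ->.
  split=> -[H Ub]; split=> //; move: H; rewrite Ub.
    exact: (iffLR (mul_indic_eq _ x (e w) s0)).
  exact: (iffRL (mul_indic_eq _ x (e w) s0)).
Qed.

Lemma P_DeltaL i x : P (Delta i @^-1` [set x]) =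
  P (Delta i @^-1` [set x] `&` U i @^-1` [set false]) +
  P (Delta i @^-1` [set x] `&` U i @^-1` [set true]).
Proof.
apply: measureU_bool (mU i).
exact: measurable_preimage (measurable_DeltaL i) (measurable_set1 x).
Qed.

Local Close Scope ereal_scope.

Lemma P_DeltaL0_given_U i b :
  prR P (Delta i @^-1` [set 0] `&` U i @^-1` [set b]) / prR P (U i @^-1` [set b]) =
  1 - Lmu.
Proof.
have s0 : (0 == if b then -1 else 1 :> R) = false.
  by case: b; rewrite eq_sym ?oppr_eq0 oner_eq0.
by rewrite /prR P_DeltaL_U P_U s0 eqxx /= invrK divfK // pnatr_eq0.
Qed.

Lemma mutual_info_DeltaL_U i : MI_DeltaL_U Zt U W f P i = Lmu * ln 2.
Proof.
have m1_neq1 : (-1 == 1 :> R) = false by apply/negbTE/eqP => h; lra.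
have m1_neq0 : (-1 == 0 :> R) = false by rewrite oppr_eq0 oner_eq0.
rewrite /MI_DeltaL_U /mutual_info !big_cons !big_nil /= /prR.
rewrite !P_DeltaL !P_DeltaL_U !P_U /= !m1_neq1 !m1_neq0 [1 == -1]eq_sym !m1_neq1.
rewrite [0 == 1]eq_sym [0 == -1]eq_sym !m1_neq0 !oner_eq0 !eqxx /= !add0r !addr0.
by rewrite ln_ratio_term_half ln_ratio_term_mean !add0r -mulrDl -splitr.
Qed.

Lemma L_n_eq0 : L_n Zt U W f P = 0.
Proof.
rewrite /L_n (ae_eq_integral (cst 0)) ?integral0 //.
- apply/measurable_EFinP; apply: measurable_funM => //; apply: measurable_sum => i.
  exact: measurable_zero_one_loss (measurable_selected i).
- apply: filterS (filter_forall _ interp) => w train0 _ /=.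
  by rewrite big1 ?mulr0 // => i _; exact: train0.
Qed.

End supersample.

Theorem theorem3 (R : realType)
  (dO : measure_display) (Omega : measurableType dO) (P : probability Omega R)
  (dX dY dW : measure_display) (X : measurableType dX) (Y : measurableType dY)
  (Wt : measurableType dW) (n : nat) (n_gt0 : (0 < n)%N)
  (mu : probability (X * Y)%type R)
  (f : Wt -> X -> Y)
  (K : R.-pker (n.-tuple (X * Y)%type) ~> Wt)
  (Zt : 'I_n -> bool -> Omega -> (X * Y)%type) (U : 'I_n -> Omega -> bool)
  (Zp : Omega -> (X * Y)%type) (W : Omega -> Wt)
  (* measurability *)
  (mloss : measurable [set p : (Wt * (X * Y))%type | f p.1 p.2.1 != p.2.2])
  (mZt : forall i j, measurable_fun setT (Zt i j))
  (mU : forall i, measurable (U i @^-1` [set true]))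
  (mZp : measurable_fun setT Zp)
  (mW : measurable_fun setT W)
  (* Zt_{i,j}, U_i, Z' mutually independent, with laws mu, uniform, mu *)
  (indep : mutually_independent P (supersample_events Zt U Zp))
  (lawZt : forall i j B, measurable B -> P (Zt i j @^-1` B) = mu B)
  (lawZp : forall B, measurable B -> P (Zp @^-1` B) = mu B)
  (lawU : forall i, P (U i @^-1` [set true]) = (2^-1)%:E)
  (* W = A(Zt_U): conditionally on (Zt, U, Z'), W has law K(Zt_U) *)
  (lawW : forall E, <<s supersample_generators Zt U Zp >> E ->
     forall B, measurable B ->
     P (E `&` W @^-1` B) = (\int[P]_(w in E) K (train_sample Zt U w) B)%E)
  (* interpolation: zero training error almost surely *)
  (interp : forall i : 'I_n,
     {ae P, forall w, zero_one_loss f (W w) (Zt i (U i w) w) = 0 :> R}) :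
  (forall i : 'I_n,
     alpha Zt U W f P i = alpha1 Zt U W f P i /\
     MI_DeltaL_U Zt U W f P i = (1 - alpha Zt U W f P i) * ln 2) /\
  `|gen_error Zt U Zp W f P| = L_mu Zp W f P /\
  L_mu Zp W f P = \sum_(i < n) MI_DeltaL_U Zt U W f P i / (n%:R * ln 2).
Proof.
have L_n0 : L_n Zt U W f P = 0 by exact: L_n_eq0.
have Lmu_ge0 : 0 <= L_mu Zp W f P by exact: L_mu_ge0.
have alphaE i : alpha Zt U W f P i = 1 - L_mu Zp W f P.
  exact: (P_DeltaL0_given_U (mu := mu) (K := K)).
have alpha1E i : alpha1 Zt U W f P i = 1 - L_mu Zp W f P.
  exact: (P_DeltaL0_given_U (mu := mu) (K := K)).
have MIE i : MI_DeltaL_U Zt U W f P i = L_mu Zp W f P * ln 2.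
  exact: (mutual_info_DeltaL_U (mu := mu) (K := K)).
split; first by move=> i; rewrite MIE alphaE alpha1E; split => //; ring.
split; first by rewrite /gen_error L_n0 subr0 ger0_norm.
have ln2 : ln (2 : R) != 0 by rewrite gt_eqF // ln_gt0 // ltr1n.
have n0 : n%:R != 0 :> R by rewrite pnatr_eq0 -lt0n.
under eq_bigr do rewrite MIE.
rewrite sumr_const card_ord -mulr_natr.
by field; rewrite mul1r ln2 n0.
Qed.
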